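(* Consider a convex $n$-gon with vertices $0,\dots,n-1$ in cyclic order, integers $0<a<b<c<n-1$, and $V_R=\{0,\dots,a-1\}$, $V_B=\{a,\dots,b-1\}$, $V_L=\{b,\dots,c-1\}$, $V_T=\{c,\dots,n-1\}$, with $|V_L|\ge3$, $|V_R|\ge 3$, $|V_T|\ge 2$, $|V_B|\ge2$. Let $B_Q$ be the set of all edges joining a vertex of $V_R$ to a vertex of $V_L$ together with all edges joining a vertex of $V_T$ to a vertex of $V_B$. Let $B_T$ be a saturated blocker for triangulations of the convex polygon with vertex set $V_T\cup\{0,c-1\}$, and $B_B$ a saturated blocker for triangulations of the convex polygon with vertex set $V_B\cup\{a-1,b\}$. Then $B_M=\big(B_Q\setminus\{(0,c-1),(a-1,b)\}\big)\cup B_T\cup B_B$ is a saturated blocker for triangulations of the $n$-gon, of size $|V_T||V_B|+|V_L||V_R|+|B_T|+|B_B|-2$.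
   Context: An edge $(i,j)$ is the segment between vertices $i,j$; boundary edges of a convex polygon join cyclically consecutive vertices, diagonals are the other edges. Two edges cross if they share an interior point. A triangulation of a convex polygon is a maximal set of pairwise non-crossing diagonals of it. A blocker is a set $B$ of diagonals having a diagonal in common with every triangulation; it is saturated if for every $e\in B$, $B\setminus\{e\}$ is not a blocker. *)

From mathcomp Require Import all_boot all_order.
Set Implicit Arguments. Unset Strict Implicit. Unset Printing Implicit Defensive.

(* Vertices of the convex n-gon are 'I_n, in cyclic order 0,1,...,n-1.
   An edge (i,j) is represented by the ordered pair (i,j) with i < j. *)
Definition edge (n : nat) := ('I_n * 'I_n)%type.

Definition edge_is n (e : edge n) (i j : nat) : bool :=
  (val e.1 == i) && (val e.2 == j).

(* A convex polygon whose vertex set S is a subset of the vertices of the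
   convex n-gon; its cyclic order is the induced one.  e is a diagonal of it:
   both endpoints in S and they are not cyclically consecutive in S. *)
Definition is_diag n (S : {set 'I_n}) (e : edge n) : bool :=
  [&& e.1 \in S, e.2 \in S, e.1 < e.2,
      [exists k in S, (e.1 < k) && (k < e.2)] &
      [exists k in S, (k < e.1) || (e.2 < k)]].

Definition diagonals n (S : {set 'I_n}) : {set edge n} := [set e | is_diag S e].

(* Two edges cross (share an interior point) iff their endpoints interleave
   strictly (vertices in convex position). *)
Definition cross n (e f : edge n) : bool :=
  [&& e.1 < f.1, f.1 < e.2 & e.2 < f.2] || [&& f.1 < e.1, e.1 < f.2 & f.2 < e.2].

Definition noncrossing n (T : {set edge n}) : Prop :=
  forall e f, e \in T -> f \in T -> ~~ cross e f.

Definition triangulation n (S : {set 'I_n}) (T : {set edge n}) : Prop :=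
  [/\ T \subset diagonals S, noncrossing T &
      forall T' : {set edge n}, T \subset T' -> T' \subset diagonals S -> noncrossing T' -> T' = T].

Definition blocker n (S : {set 'I_n}) (B : {set edge n}) : Prop :=
  B \subset diagonals S /\
  forall T, triangulation S T -> exists2 e, e \in B & e \in T.

Definition saturated_blocker n (S : {set 'I_n}) (B : {set edge n}) : Prop :=
  blocker S B /\ forall e, e \in B -> ~ blocker S (B :\ e).

(* Walking from the boundary edge (0, n-1) through the triangles of a triangulation, one
   endpoint stays in V_R and the other in V_T until the apex of a triangle falls in V_B or V_L,
   which produces an edge of B_Q. If that edge is (0, c-1) or (a-1, b), it cuts off the polygon
   of B_T or B_B, and the restricted triangulation is met by that blocker. Conversely every
   e in B_M lies in a triangulation meeting B_M only in e: cut along e, or along the edge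
   bounding the small polygon of B_T or B_B (triangulated there so as to meet that blocker only
   in e), and triangulate the remaining pieces by fans. For the count, the three parts of B_M
   are disjoint and the two removed edges lie in B_Q. *)

From mathcomp Require Import all_boot all_order zify.
From Stdlib Require Import Classical.

Set Implicit Arguments. Unset Strict Implicit. Unset Printing Implicit Defensive.

Section Polygon.
Variable n : nat.
Implicit Types (S : {set 'I_n}) (T B : {set edge n}) (e f g : edge n) (u v x : 'I_n).

Lemma exists_vertex k : k < n -> exists v : 'I_n, v = k :> nat.
Proof. by move=> lt_kn; exists (Ordinal lt_kn). Qed.

Lemma card_le_range (A : {set 'I_n}) lo hi :
  {in A, forall i : 'I_n, lo <= i < hi} -> #|A| <= hi - lo.
Proof.
move=> A_range; rewrite cardE -(size_map (@nat_of_ord n)) -(size_iota lo (hi - lo)).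
apply: uniq_leq_size; first by rewrite (map_inj_uniq (@ord_inj n)) enum_uniq.
move=> _ /mapP[i iA ->]; rewrite mem_enum in iA.
by rewrite mem_iota; have := A_range i iA; lia.
Qed.

Lemma crossC e f : cross e f = cross f e.
Proof. by rewrite /cross orbC. Qed.

Lemma cross_irr e : cross e e = false.
Proof. by rewrite /cross ltnn. Qed.

Lemma in_diagonals S e : (e \in diagonals S) = is_diag S e.
Proof. by rewrite inE. Qed.

Lemma is_diagP S e : is_diag S e ->
  [/\ e.1 \in S, e.2 \in S, e.1 < e.2,
      exists2 k, k \in S & e.1 < k < e.2 &
      exists2 k, k \in S & (k < e.1) || (e.2 < k)].
Proof.
case/and5P=> e1S e2S e12 /exists_inP[k kS ke] /exists_inP[k' k'S k'e].
by split=> //; [exists k | exists k'].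
Qed.

Lemma is_diag_witnesses S e (ks : seq 'I_n) :
  e.1 \in S -> e.2 \in S -> e.1 < e.2 ->
  has (fun k => (k \in S) && (e.1 < k < e.2)) ks ->
  has (fun k => (k \in S) && ((k < e.1) || (e.2 < k))) ks -> is_diag S e.
Proof.
move=> e1S e2S e12 /hasP[k _ /andP[kS ke]] /hasP[k' _ /andP[k'S k'e]].
by apply/and5P; split=> //; apply/exists_inP; [exists k | exists k'].
Qed.

Lemma is_diag_cross S e f : e.1 \in S -> e.2 \in S -> f.1 \in S -> f.2 \in S ->
  f.1 < f.2 -> cross e f -> is_diag S f.
Proof.
move=> e1S e2S f1S f2S f12 cr; apply: (is_diag_witnesses (ks := [:: e.1; e.2])) => //=;
  by rewrite e1S e2S; move: cr; rewrite /cross; lia.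
Qed.

Lemma is_diag_subset S S' e : S \subset S' -> is_diag S e -> is_diag S' e.
Proof.
move=> /subsetP sSS' /is_diagP[e1S e2S e12 [k kS ke] [k' k'S k'e]].
by apply: (is_diag_witnesses (ks := [:: k; k'])); rewrite /= ?sSS' ?ke ?k'e ?orbT.
Qed.

Lemma diagonals_subset S S' : S \subset S' -> diagonals S \subset diagonals S'.
Proof. by move=> sSS'; apply/subsetP=> e; rewrite !in_diagonals; apply: is_diag_subset. Qed.

Lemma is_diag_setT (p q : 'I_n) :
  is_diag [set: 'I_n] (p, q) = (p.+1 < q) && ((0 < p) || (q.+1 < n)).
Proof.
apply/idP/idP => [/is_diagP[_ _ /= pq [k _ kpq] [k' _ k'pq]] | /andP[pq out]].
  by have := ltn_ord k'; lia.
have [p1 p1E] : exists w : 'I_n, w = p.+1 :> nat by apply: exists_vertex; have := ltn_ord q; lia.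
have [o0 o0E] : exists w : 'I_n, w = 0 :> nat by apply: exists_vertex; have := ltn_ord q; lia.
have [on1 on1E] : exists w : 'I_n, w = n.-1 :> nat by apply: exists_vertex; have := ltn_ord q; lia.
by apply: (is_diag_witnesses (ks := [:: p1; o0; on1])); rewrite /= ?inE //; lia.
Qed.

Lemma triangulation_diag S T e : triangulation S T -> e \in T -> is_diag S e.
Proof. by case=> /subsetP sTD _ _ /sTD; rewrite in_diagonals. Qed.

Lemma triangulation_max S T e : triangulation S T -> is_diag S e ->
  (forall f, f \in T -> ~~ cross e f) -> e \in T.
Proof.
case=> sTD ncT maxT eS ncE; suff <- : e |: T = T by exact: setU11.
apply: maxT; first exact: subsetUr.
  by rewrite subUset sub1set in_diagonals eS.
move=> f g /setU1P[-> | fT] /setU1P[-> | gT]; first by rewrite cross_irr.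
- exact: ncE.
- by rewrite crossC ncE.
- exact: ncT.
Qed.

Definition inside S u v := [set x in S | u <= x <= v].
Definition outside S u v := [set x in S | (x <= u) || (v <= x)].

Lemma in_inside S u v x : (x \in inside S u v) = (x \in S) && (u <= x <= v).
Proof. by rewrite inE. Qed.

Lemma in_outside S u v x : (x \in outside S u v) = (x \in S) && ((x <= u) || (v <= x)).
Proof. by rewrite inE. Qed.

Lemma inside_sub S u v : inside S u v \subset S.
Proof. by apply/subsetP=> x; rewrite in_inside => /andP[]. Qed.

Lemma outside_sub S u v : outside S u v \subset S.
Proof. by apply/subsetP=> x; rewrite in_outside => /andP[]. Qed.

Lemma cross_inside_outside S u v f g :
  is_diag (inside S u v) f -> is_diag (outside S u v) g -> ~~ cross f g.
Proof.
case/is_diagP; rewrite !in_inside => /andP[_ f1] /andP[_ f2] f12 _ _.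
case/is_diagP; rewrite !in_outside => /andP[_ g1] /andP[_ g2] g12 _ _.
by rewrite /cross; lia.
Qed.

Lemma cross_inside S u v f : is_diag (inside S u v) f -> ~~ cross (u, v) f.
Proof.
by case/is_diagP; rewrite !in_inside => /andP[_ f1] /andP[_ f2] f12 _ _; rewrite /cross /=; lia.
Qed.

Lemma cross_outside S u v f : is_diag (outside S u v) f -> ~~ cross (u, v) f.
Proof.
by case/is_diagP; rewrite !in_outside => /andP[_ f1] /andP[_ f2] f12 _ _; rewrite /cross /=; lia.
Qed.

Lemma inside_diag_neq S u v (p q : 'I_n) : is_diag (inside S u v) (p, q) ->
  ~~ ((p == u :> nat) && (q == v :> nat)).
Proof. by case/is_diagP=> _ _ _ _ [k]; rewrite in_inside /=; lia. Qed.

Lemma outside_diag_neq S u v (p q : 'I_n) : is_diag (outside S u v) (p, q) ->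
  ~~ ((p == u :> nat) && (q == v :> nat)).
Proof. by case/is_diagP=> _ _ _ [k]; rewrite in_outside /=; lia. Qed.

Lemma diag_split S u v g : u \in S -> v \in S -> u < v -> is_diag S g -> ~~ cross (u, v) g ->
  [|| is_diag (inside S u v) g, is_diag (outside S u v) g | g == (u, v)].
Proof.
case: g => p q uS vS uv pqS; have [pS qS /= pq [k kS kpq] [k' k'S k'pq]] := is_diagP pqS.
rewrite /cross xpair_eqE -!(inj_eq (@ord_inj _)) /= => ncr.
have [pq_in | pq_out] := boolP ((u <= p) && (q <= v)).
  have [_ | ne] := boolP ((p == u :> nat) && (q == v :> nat)); first by rewrite !orbT.
  apply/orP; left; apply: (is_diag_witnesses (ks := [:: k; k'; u; v]));
    rewrite /= ?in_inside ?pS ?qS ?kS ?k'S ?uS ?vS /=; lia.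
apply/orP; right; apply/orP; left; apply: (is_diag_witnesses (ks := [:: k; k'; u; v]));
  rewrite /= ?in_outside ?pS ?qS ?kS ?k'S ?uS ?vS /=; lia.
Qed.

Section CutAlongDiagonal.
Variables (S P Q : {set 'I_n}) (d : edge n).
Hypotheses (sPS : P \subset S) (sQS : Q \subset S).
Hypothesis ncPQ : forall f g, is_diag P f -> is_diag Q g -> ~~ cross f g.
Hypothesis ncdP : forall f, is_diag P f -> ~~ cross d f.
Hypothesis ncdQ : forall f, is_diag Q f -> ~~ cross d f.
Hypothesis splitS : forall g, is_diag S g -> ~~ cross d g -> [|| is_diag P g, is_diag Q g | g == d].

Lemma triangulation_restrict T : triangulation S T -> d \in T ->
  triangulation P (T :&: diagonals P).
Proof.
move=> tT dT; have [sTD ncT _] := tT; split.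
- exact: subsetIr.
- by move=> e f /setIP[eT _] /setIP[fT _]; apply: ncT.
move=> T' sTT' sT'P ncT'; apply/eqP; rewrite eqEsubset sTT' andbT.
apply/subsetP=> f fT'; have fP : is_diag P f by rewrite -in_diagonals (subsetP sT'P).
rewrite inE in_diagonals fP andbT; apply: (triangulation_max tT).
  by apply: is_diag_subset fP.
move=> g gT; have gS := triangulation_diag tT gT.
case/or3P: (splitS gS (ncT _ _ dT gT)) => [gP | gQ | /eqP->].
- by apply: ncT' fT' _; apply: (subsetP sTT'); rewrite inE gT in_diagonals.
- exact: ncPQ.
- by rewrite crossC ncdP.
Qed.

Lemma triangulation_glue T1 T2 : is_diag S d -> triangulation P T1 -> triangulation Q T2 ->
  triangulation S (T1 :|: T2 :|: [set d]).
Proof.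
move=> dS tT1 tT2; have [sT1 ncT1 _] := tT1; have [sT2 ncT2 _] := tT2.
have diagT f : f \in T1 :|: T2 :|: [set d] ->
    [|| (f \in T1) && is_diag P f, (f \in T2) && is_diag Q f | f == d].
  case/setUP=> [/setUP[fT | fT] | /set1P->]; last by rewrite eqxx !orbT.
    by rewrite fT (triangulation_diag tT1 fT).
  by rewrite fT (triangulation_diag tT2 fT) /= orbT.
have ncT : noncrossing (T1 :|: T2 :|: [set d]).
  move=> e f /diagT/or3P[/andP[eT1 eP] | /andP[eT2 eQ] | /eqP->]
             /diagT/or3P[/andP[fT1 fP] | /andP[fT2 fQ] | /eqP->].
  - exact: ncT1.
  - exact: ncPQ.
  - by rewrite crossC ncdP.
  - by rewrite crossC ncPQ.
  - exact: ncT2.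
  - by rewrite crossC ncdQ.
  - exact: ncdP.
  - exact: ncdQ.
  - by rewrite cross_irr.
split=> //.
  rewrite !subUset sub1set in_diagonals dS andbT.
  rewrite (subset_trans sT1 (diagonals_subset sPS)).
  by rewrite (subset_trans sT2 (diagonals_subset sQS)).
move=> T' sTT' sT'S ncT'; apply/eqP; rewrite eqEsubset sTT' andbT.
have dT' : d \in T' by apply: (subsetP sTT'); rewrite !inE eqxx orbT.
apply/subsetP=> f fT'; have fS : is_diag S f by rewrite -in_diagonals (subsetP sT'S).
have ncf g : g \in T1 :|: T2 :|: [set d] -> ~~ cross f g.
  by move=> gT; apply: ncT' fT' (subsetP sTT' _ gT).
case/or3P: (splitS fS (ncT' _ _ dT' fT')) => [fP | fQ | /eqP->]; last by rewrite !inE eqxx orbT.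
  by rewrite !inE (triangulation_max tT1 fP) // => g gT1; apply: ncf; rewrite !inE gT1.
by rewrite !inE (triangulation_max tT2 fQ) ?orbT // => g gT2; apply: ncf; rewrite !inE gT2 orbT.
Qed.

End CutAlongDiagonal.

Lemma triangulation_split S u v T1 T2 : is_diag S (u, v) ->
  triangulation (inside S u v) T1 -> triangulation (outside S u v) T2 ->
  triangulation S (T1 :|: T2 :|: [set (u, v)]).
Proof.
move=> uvS; have [uS vS uv _ _] := is_diagP uvS.
apply: triangulation_glue => //.
- exact: inside_sub.
- exact: outside_sub.
- exact: cross_inside_outside.
- exact: cross_inside.
- exact: cross_outside.
- by move=> g; apply: diag_split.
Qed.

Lemma triangulation_inside S u v T : triangulation S T -> (u, v) \in T ->
  triangulation (inside S u v) (T :&: diagonals (inside S u v)).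
Proof.
move=> tT uvT; have [uS vS uv _ _] := is_diagP (triangulation_diag tT uvT).
apply: (triangulation_restrict (inside_sub S u v) (@cross_inside_outside S u v)
          (@cross_inside S u v) _ tT uvT).
by move=> g; apply: diag_split.
Qed.

Lemma triangulation_outside S u v T : triangulation S T -> (u, v) \in T ->
  triangulation (outside S u v) (T :&: diagonals (outside S u v)).
Proof.
move=> tT uvT; have [uS vS uv _ _] := is_diagP (triangulation_diag tT uvT).
apply: (triangulation_restrict (Q := inside S u v) (outside_sub S u v) _
          (@cross_outside S u v) _ tT uvT).
  by move=> f g fO gI; rewrite crossC (cross_inside_outside gI fO).
by move=> g gS ncg; case/or3P: (diag_split uS vS uv gS ncg) => ->; rewrite ?orbT.
Qed.

Definition fan S x : {set edge n} := [set e in diagonals S | (e.1 == x) || (e.2 == x)].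

Lemma in_fan_diag S x e : e \in fan S x -> is_diag S e.
Proof. by rewrite inE in_diagonals => /andP[]. Qed.

Lemma diag_crossed_at S e x : is_diag S e -> x \in S -> e.1 != x -> e.2 != x ->
  exists2 f, is_diag S f & ((f.1 == x) || (f.2 == x)) && cross e f.
Proof.
case: e => p q pqS xS; rewrite -!(inj_eq (@ord_inj _)) /= => px qx.
have [pS qS /= pq [k kS kpq] [k' k'S k'pq]] := is_diagP pqS.
suff [y [z [yS zS yzx yz cr]]] : exists y z,
    [/\ y \in S, z \in S, (y == x) || (z == x), y < z & cross (p, q) (y, z)].
  by exists (y, z); [apply: (is_diag_cross (e := (p, q))) | rewrite yzx cr].
have : [|| p < x < q, x < p | q < x] by lia.
case/or3P=> x_pq.
- case/orP: k'pq => k'pq; [exists k', x | exists x, k'];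
    by rewrite k'S xS eqxx ?orbT /cross /=; split=> //; lia.
- by exists x, k; rewrite kS xS eqxx /cross /=; split=> //; lia.
- by exists k, x; rewrite kS xS eqxx orbT /cross /=; split=> //; lia.
Qed.

Lemma fan_triangulation S x : x \in S -> triangulation S (fan S x).
Proof.
move=> xS; split.
- by apply/subsetP=> e; rewrite inE => /andP[].
- move=> [p q] [r s]; rewrite !inE -!(inj_eq (@ord_inj _)) /cross /=.
  by case/andP=> /is_diagP[_ _ /= pq _ _] pqx /andP[/is_diagP[_ _ /= rs _ _] rsx]; lia.
move=> T' fanT' sT'D ncT'; apply/eqP; rewrite eqEsubset fanT' andbT.
apply/subsetP=> e eT'; have eS : is_diag S e by rewrite -in_diagonals (subsetP sT'D).
rewrite inE in_diagonals eS /=; apply/negPn/negP; rewrite negb_or => /andP[ex1 ex2].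
have [f fS /andP[fx cr]] := diag_crossed_at eS xS ex1 ex2.
have fT' : f \in T' by apply: (subsetP fanT'); rewrite inE in_diagonals fS.
by have := ncT' _ _ eT' fT'; rewrite cr.
Qed.

Definition double_fan S u v x y : {set edge n} :=
  fan (inside S u v) x :|: fan (outside S u v) y :|: [set (u, v)].

Lemma double_fan_triangulation S u v x y : is_diag S (u, v) ->
  x \in inside S u v -> y \in outside S u v -> triangulation S (double_fan S u v x y).
Proof. by move=> uvS xI yO; apply: triangulation_split => //; apply: fan_triangulation. Qed.

(* w is the largest vertex joined to u by an edge of T or of the polygon; its maximality forces
   (w, v) to be such an edge too, so u, w, v is the triangle of T on the edge (u, v). *)
Lemma triangulation_apex T u v : triangulation [set: 'I_n] T -> u.+1 < v ->
  (u, v) \in T \/ (u = 0 :> nat /\ v = n.-1 :> nat) ->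
  exists w : 'I_n, [/\ u < w < v, (u, w) \in T \/ w = u.+1 :> nat
                    & (w, v) \in T \/ w.+1 = v :> nat].
Proof.
move=> tT uv uvT; have [_ ncT _] := tT.
have [u1 u1E] : exists w : 'I_n, w = u.+1 :> nat by apply: exists_vertex; have := ltn_ord v; lia.
pose P (w : 'I_n) := (u < w < v) && (((u, w) \in T) || (w == u.+1 :> nat)).
have Pu1 : P u1 by rewrite /P u1E eqxx orbT; lia.
case: (arg_maxnP (@nat_of_ord n) Pu1) => w /andP[uwv uwT] wmax.
exists w; split=> //; first by case/orP: uwT => [|/eqP]; [left | right].
have [wv | ] := boolP (w.+1 < v); last by right; lia.
left; apply: (triangulation_max tT); first by rewrite is_diag_setT wv; lia.
move=> [r s] gT; have [_ _ /= rs _ _] := is_diagP (triangulation_diag tT gT).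
have s_lt := ltn_ord s.
have uv_g : (u, v) \in T -> ~~ cross (u, v) (r, s) by move/ncT; apply.
have uw_g : (u, w) \in T -> ~~ cross (u, w) (r, s) by move/ncT; apply.
have s_le : r = u :> nat -> s < v -> s <= w.
  move=> /ord_inj ru sv; apply: wmax; rewrite /P -ru gT andbT; lia.
move: uv_g uw_g; rewrite /cross /=.
case: uvT => [-> | uv_bd]; case/orP: uwT => [-> | /eqP uw_bd] /=; lia.
Qed.

Lemma triangulation_quad_edge T a b c : triangulation [set: 'I_n] T ->
  0 < a -> a < b -> b < c -> c < n ->
  exists2 e, e \in T & (e.1 < a) && (b <= e.2 < c) || (a <= e.1 < b) && (c <= e.2).
Proof.
move=> tT a0 ab bc cn.
suff descend m u v : v - u <= m -> u < a -> c <= v ->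
    (u, v) \in T \/ (u = 0 :> nat /\ v = n.-1 :> nat) ->
    exists2 e, e \in T & (e.1 < a) && (b <= e.2 < c) || (a <= e.1 < b) && (c <= e.2).
  have [o0 o0E] : exists w : 'I_n, w = 0 :> nat by apply: exists_vertex; lia.
  have [on1 on1E] : exists w : 'I_n, w = n.-1 :> nat by apply: exists_vertex; lia.
  by apply: (descend n o0 on1); lia.
elim: m u v => [|m IH] u v vu ua cv uvT; first lia.
have [|w [uwv uwT wvT]] := triangulation_apex tT (_ : u.+1 < v) uvT; first lia.
case: (ltnP w a) => wa.
  by apply: (IH w v); [lia | lia | lia | left; case: wvT => //; lia].
case: (ltnP w b) => wb.
  by exists (w, v); [case: wvT => //; lia | rewrite /=; lia].
have uwT' : (u, w) \in T by case: uwT => //; lia.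
case: (ltnP w c) => wc; first by exists (u, w) => //=; lia.
by apply: (IH u w) => //; [lia | left].
Qed.

Lemma saturated_blocker_witness S B e : saturated_blocker S B -> e \in B ->
  exists2 T, triangulation S T & forall f, f \in T -> f \in B -> f = e.
Proof.
case=> [[sBD _] satB] eB; apply: NNPP => noT; apply: (satB e eB); split.
  exact: subset_trans (subD1set B e) sBD.
move=> T tT; apply: NNPP => noF; apply: noT; exists T => // f fT fB.
apply: NNPP => fe; apply: noF; exists f => //; rewrite !inE fB andbT; exact/eqP.
Qed.

Lemma not_blocker_setD1 S B T e : triangulation S T ->
  (forall f, f \in T -> f \in B -> f = e) -> ~ blocker S (B :\ e).
Proof.
move=> tT TBe [_ /(_ T tT)[f /setD1P[fe fB] fT]].
by move: fe; rewrite (TBe f fT fB) eqxx.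
Qed.

End Polygon.

Section Proposition.
Variables (n a b c : nat) (BT BB : {set edge n}).

Definition VR := [set i : 'I_n | i < a].
Definition VB := [set i : 'I_n | (a <= i) && (i < b)].
Definition VL := [set i : 'I_n | (b <= i) && (i < c)].
Definition VT := [set i : 'I_n | c <= i].
Definition BQ := [set e : edge n | ((e.1 \in VR) && (e.2 \in VL))
                                   || ((e.1 \in VB) && (e.2 \in VT))].
Definition polyT := VT :|: [set i : 'I_n | (val i == 0) || (val i == c.-1)].
Definition polyB := VB :|: [set i : 'I_n | (val i == a.-1) || (val i == b)].
Definition BM := [set e in BQ | ~~ edge_is e 0 c.-1 && ~~ edge_is e a.-1 b] :|: BT :|: BB.

(* Arithmetic conditions met by the edges (p, q) of B_Q minus the two removed edges, of B_T
   and of B_B respectively; they are all the saturation arguments need to know about B_M. *)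
Definition Q_shaped (p q : nat) :=
  [&& p < a, b <= q < c, ~~ ((p == 0) && (q == c.-1)) & ~~ ((p == a.-1) && (q == b))]
  || (a <= p < b) && (c <= q).
Definition T_shaped (p q : nat) := [&& (p == 0) || (c.-1 <= p), p.+1 < q & c <= q].
Definition B_shaped (p q : nat) :=
  [&& a.-1 <= p, p.+1 < q, q <= b & ~~ ((p == a.-1) && (q == b))].

Hypotheses (satT : saturated_blocker polyT BT) (satB : saturated_blocker polyB BB).
(* |V_R| >= 3, |V_B| >= 2, |V_L| >= 3 and |V_T| >= 2. *)
Hypotheses (a_gt2 : 2 < a) (ab : a.+1 < b) (bc : b.+2 < c) (cn : c.+1 < n).

Lemma polyT_diag_shape (p q : 'I_n) : is_diag polyT (p, q) -> T_shaped p q.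
Proof.
case/is_diagP=> /=; rewrite /polyT /VT !inE /= => pT qT pq [k]; rewrite !inE /= => kT kpq _.
by rewrite /T_shaped; lia.
Qed.

Lemma polyB_diag_shape (p q : 'I_n) : is_diag polyB (p, q) -> B_shaped p q.
Proof.
case/is_diagP=> /=; rewrite /polyB /VB !inE /= => pB qB pq [k]; rewrite !inE /= => kB kpq [k'].
rewrite !inE /= => k'B k'pq.
by rewrite /B_shaped; lia.
Qed.

Lemma polyT_outside (u v : 'I_n) : u = 0 :> nat -> v = c.-1 :> nat ->
  outside [set: 'I_n] u v = polyT.
Proof. by move=> u0 vc; apply/setP=> i; rewrite in_outside /polyT /VT !inE /=; lia. Qed.

Lemma polyB_inside (u v : 'I_n) : u = a.-1 :> nat -> v = b :> nat ->
  inside [set: 'I_n] u v = polyB.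
Proof. by move=> ua vb; apply/setP=> i; rewrite in_inside /polyB /VB !inE /=; lia. Qed.

Lemma BT_shape (p q : 'I_n) : (p, q) \in BT -> T_shaped p q.
Proof.
by case: satT => [[/subsetP sBT _] _] /sBT; rewrite in_diagonals; apply: polyT_diag_shape.
Qed.

Lemma BB_shape (p q : 'I_n) : (p, q) \in BB -> B_shaped p q.
Proof.
by case: satB => [[/subsetP sBB _] _] /sBB; rewrite in_diagonals; apply: polyB_diag_shape.
Qed.

Lemma BM_cases (p q : 'I_n) : (p, q) \in BM ->
  [\/ Q_shaped p q, (p, q) \in BT | (p, q) \in BB].
Proof.
rewrite /BM !inE => /orP[/orP[pqQ | ->] | ->];
  [constructor 1 | constructor 2 | constructor 3] => //.
by move: pqQ; rewrite /BQ /VR /VB /VL /VT /edge_is ?inE /= /Q_shaped; lia.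
Qed.

Lemma BM_shape (p q : 'I_n) : (p, q) \in BM -> [|| Q_shaped p q, T_shaped p q | B_shaped p q].
Proof. by case/BM_cases=> [-> // | /BT_shape-> | /BB_shape->]; rewrite ?orbT. Qed.

Lemma BM_blocks T : triangulation [set: 'I_n] T -> exists2 e, e \in BM & e \in T.
Proof.
move=> tT; have [||||[p q] pqT /= pqQ] := triangulation_quad_edge (a := a) (b := b) (c := c) tT;
  try lia.
have [/andP[/eqP p0 /eqP qc] | not_0c] := boolP ((p == 0 :> nat) && (q == c.-1 :> nat)).
  have tTT : triangulation polyT (T :&: diagonals polyT).
    by rewrite -(polyT_outside p0 qc); apply: triangulation_outside.
  have [[_ /(_ _ tTT)[g gBT /setIP[gT _]]] _] := satT.
  by exists g; rewrite // /BM !inE gBT orbT.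
have [/andP[/eqP pa /eqP qb] | not_ab] := boolP ((p == a.-1 :> nat) && (q == b :> nat)).
  have tTB : triangulation polyB (T :&: diagonals polyB).
    by rewrite -(polyB_inside pa qb); apply: triangulation_inside.
  have [[_ /(_ _ tTB)[g gBB /setIP[gT _]]] _] := satB.
  by exists g; rewrite // /BM !inE gBB !orbT.
by exists (p, q) => //; rewrite /BM /BQ /VR /VB /VL /VT /edge_is !inE /=; lia.
Qed.

Lemma card_BM : #|BM| = #|VT| * #|VB| + #|VL| * #|VR| + #|BT| + #|BB| - 2.
Proof.
have cardsU_disj (A B : {set edge n}) : (forall p q, (p, q) \in A -> (p, q) \in B -> False) ->
    #|A :|: B| = #|A| + #|B|.
  move=> AB; rewrite cardsU; suff -> : A :&: B = set0 by rewrite cards0 subn0.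
  by apply/setP=> -[p q]; rewrite !inE; apply/negbTE/negP=> /andP[/AB].
have [o0 o0E] : exists w : 'I_n, w = 0 :> nat by apply: exists_vertex; lia.
have [oa1 oa1E] : exists w : 'I_n, w = a.-1 :> nat by apply: exists_vertex; lia.
have [ob obE] : exists w : 'I_n, w = b :> nat by apply: exists_vertex; lia.
have [oc1 oc1E] : exists w : 'I_n, w = c.-1 :> nat by apply: exists_vertex; lia.
set D := [set (o0, oc1); (oa1, ob)].
have cardD : #|D| = 2 by rewrite cards2 xpair_eqE -!(inj_eq (@ord_inj _)); lia.
have sDQ : D \subset BQ by apply/subsetP=> e; rewrite !inE => /orP[] /eqP-> /=; lia.
have cardQ : #|BQ| = #|VR| * #|VL| + #|VB| * #|VT|.
  have -> : BQ = setX VR VL :|: setX VB VT by apply/setP=> -[p q]; rewrite !inE.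
  by rewrite cardsU_disj ?cardsX // => p q; rewrite !inE /=; lia.
have QD : [set e in BQ | ~~ edge_is e 0 c.-1 && ~~ edge_is e a.-1 b] = BQ :\: D.
  by apply/setP=> -[p q]; rewrite !inE /edge_is !xpair_eqE -!(inj_eq (@ord_inj _)) /=; lia.
have QT p q : (p, q) \in BQ :\: D -> (p, q) \in BT -> False.
  by move=> /setDP[pqQ _] /BT_shape; move: pqQ; rewrite /T_shaped !inE /=; lia.
have QTB p q : (p, q) \in (BQ :\: D) :|: BT -> (p, q) \in BB -> False.
  case/setUP=> [/setDP[pqQ _] | /BT_shape pqT] /BB_shape.
    by move: pqQ; rewrite /B_shaped !inE /=; lia.
  by move: pqT; rewrite /T_shaped /B_shaped; lia.
rewrite /BM QD !cardsU_disj // cardsD (setIidPr sDQ) cardD cardQ.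
by have := subset_leq_card sDQ; rewrite cardD cardQ; lia.
Qed.

Ltac edge_not_in_BM := move/BM_shape; rewrite /Q_shaped /T_shaped /B_shaped; lia.

(* Refutes [(p, q) \in fan X x -> (p, q) \in BM -> _] from the arithmetic description of X
   alone. It does not know that (p, q) is not a side of X; where that matters the fact is put
   in the context beforehand by [inside_diag_neq] or [outside_diag_neq]. *)
Ltac fan_edge_not_in_BM :=
  rewrite inE in_diagonals -!(inj_eq (@ord_inj _)) => /andP[/is_diagP[+ + /= + _ _] +] /BM_shape;
  rewrite !(in_inside, in_outside, inE) /= /Q_shaped /T_shaped /B_shaped; lia.

Lemma BT_saturated e : e \in BT -> ~ blocker [set: 'I_n] (BM :\ e).
Proof.
move=> eBT; have [TT tTT TTe] := saturated_blocker_witness satT eBT.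
have [o0 o0E] : exists w : 'I_n, w = 0 :> nat by apply: exists_vertex; lia.
have [o1 o1E] : exists w : 'I_n, w = 1 :> nat by apply: exists_vertex; lia.
have [oa oaE] : exists w : 'I_n, w = a :> nat by apply: exists_vertex; lia.
have [oc1 oc1E] : exists w : 'I_n, w = c.-1 :> nat by apply: exists_vertex; lia.
set I := inside [set: 'I_n] o0 oc1.
have tX : triangulation I (double_fan I o0 oa o0 oc1).
  apply: double_fan_triangulation; rewrite ?in_inside ?in_outside ?inE /=; try lia.
  apply: (is_diag_witnesses (ks := [:: o1; oc1])); rewrite /= ?in_inside ?inE /=; lia.
have d0c : is_diag [set: 'I_n] (o0, oc1) by rewrite is_diag_setT; lia.
have tT := triangulation_split d0c tX (_ : triangulation _ TT); rewrite polyT_outside // in tT.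
apply: (not_blocker_setD1 (tT tTT)) => -[p q].
case/setUP=> [/setUP[/setUP[/setUP[| ] | /set1P[-> ->]] | pqTT] | /set1P[-> ->]].
- fan_edge_not_in_BM.
- fan_edge_not_in_BM.
- edge_not_in_BM.
- have := polyT_diag_shape (triangulation_diag tTT pqTT).
  rewrite /T_shaped => pqT /BM_cases[| /(TTe _ pqTT) // | /BB_shape];
    rewrite /Q_shaped /B_shaped; lia.
- edge_not_in_BM.
Qed.

Lemma BB_saturated e : e \in BB -> ~ blocker [set: 'I_n] (BM :\ e).
Proof.
move=> eBB; have [TB tTB TBe] := saturated_blocker_witness satB eBB.
have [oa1 oa1E] : exists w : 'I_n, w = a.-1 :> nat by apply: exists_vertex; lia.
have [ob obE] : exists w : 'I_n, w = b :> nat by apply: exists_vertex; lia.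
have [ob1 ob1E] : exists w : 'I_n, w = b.+1 :> nat by apply: exists_vertex; lia.
have [oc ocE] : exists w : 'I_n, w = c :> nat by apply: exists_vertex; lia.
set O := outside [set: 'I_n] oa1 ob.
have tY : triangulation O (double_fan O ob oc ob oa1).
  apply: double_fan_triangulation; rewrite ?in_inside ?in_outside ?inE /=; try lia.
  apply: (is_diag_witnesses (ks := [:: ob1; oa1])); rewrite /= ?in_outside ?inE /=; lia.
have dab : is_diag [set: 'I_n] (oa1, ob) by rewrite is_diag_setT; lia.
have tT := triangulation_split dab (_ : triangulation _ TB) tY; rewrite polyB_inside // in tT.
apply: (not_blocker_setD1 (tT tTB)) => -[p q].
case/setUP=> [/setUP[pqTB | /setUP[/setUP[| ] | /set1P[-> ->]]] | /set1P[-> ->]].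
- have := polyB_diag_shape (triangulation_diag tTB pqTB).
  rewrite /B_shaped => pqB /BM_cases[| /BT_shape | /(TBe _ pqTB) //];
    rewrite /Q_shaped /T_shaped; lia.
- fan_edge_not_in_BM.
- fan_edge_not_in_BM.
- edge_not_in_BM.
- edge_not_in_BM.
Qed.

Section LeftQuadrilateralEdge.
Variables (r l : 'I_n).
Hypotheses (ra : r < a) (bl : b <= l < c).

Lemma inside_triangulation_avoiding_BM : ~~ ((r == a.-1 :> nat) && (l == b :> nat)) ->
  exists2 X, triangulation (inside [set: 'I_n] r l) X & forall f, f \in X -> f \in BM -> False.
Proof.
move=> not_ab; set I := inside [set: 'I_n] r l.
have [ra1 | ra1] := eqVneq (r : nat) a.-1.
  exists (fan I l); first by apply: fan_triangulation; rewrite in_inside inE; lia.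
  move=> -[p q] pqF; have ne := inside_diag_neq (in_fan_diag pqF).
  by move: pqF; fan_edge_not_in_BM.
have [oa1 oa1E] : exists w : 'I_n, w = a.-1 :> nat by apply: exists_vertex; lia.
have [ob1 ob1E] : exists w : 'I_n, w = b.-1 :> nat by apply: exists_vertex; lia.
exists (double_fan I r ob1 r l).
  apply: double_fan_triangulation; rewrite ?in_inside ?in_outside ?inE /=; try lia.
  apply: (is_diag_witnesses (ks := [:: oa1; l])); rewrite /= ?in_inside ?inE /=; lia.
move=> -[p q]; case/setUP=> [/setUP[| pqF] | /set1P[-> ->]].
- fan_edge_not_in_BM.
- have ne := inside_diag_neq (is_diag_subset (outside_sub _ _ _) (in_fan_diag pqF)).
  by move: pqF; fan_edge_not_in_BM.
- edge_not_in_BM.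
Qed.

Lemma outside_triangulation_avoiding_BM : ~~ ((r == 0 :> nat) && (l == c.-1 :> nat)) ->
  exists2 X, triangulation (outside [set: 'I_n] r l) X & forall f, f \in X -> f \in BM -> False.
Proof.
move=> not_0c; set O := outside [set: 'I_n] r l.
have [r0 | r0] := eqVneq (r : nat) 0.
  exists (fan O l); first by apply: fan_triangulation; rewrite in_outside inE; lia.
  move=> -[p q] pqF; have ne := outside_diag_neq (in_fan_diag pqF).
  by move: pqF; fan_edge_not_in_BM.
have [o0 o0E] : exists w : 'I_n, w = 0 :> nat by apply: exists_vertex; lia.
have [oc ocE] : exists w : 'I_n, w = c :> nat by apply: exists_vertex; lia.
exists (double_fan O r oc l r).
  apply: double_fan_triangulation; rewrite ?in_inside ?in_outside ?inE /=; try lia.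
  apply: (is_diag_witnesses (ks := [:: l; o0])); rewrite /= ?in_outside ?inE /=; lia.
move=> -[p q]; case/setUP=> [/setUP[pqF |] | /set1P[-> ->]].
- have ne := outside_diag_neq (is_diag_subset (inside_sub _ _ _) (in_fan_diag pqF)).
  by move: pqF; fan_edge_not_in_BM.
- fan_edge_not_in_BM.
- edge_not_in_BM.
Qed.

Lemma left_quad_edge_saturated : ~~ ((r == 0 :> nat) && (l == c.-1 :> nat)) ->
  ~~ ((r == a.-1 :> nat) && (l == b :> nat)) -> ~ blocker [set: 'I_n] (BM :\ (r, l)).
Proof.
move=> not_0c not_ab.
have [X1 tX1 X1BM] := inside_triangulation_avoiding_BM not_ab.
have [X2 tX2 X2BM] := outside_triangulation_avoiding_BM not_0c.
have drl : is_diag [set: 'I_n] (r, l) by rewrite is_diag_setT; lia.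
apply: (not_blocker_setD1 (triangulation_split drl tX1 tX2)) => f.
case/setUP=> [/setUP[fX | fX] fBM | /set1P-> //].
- by case: (X1BM f fX fBM).
- by case: (X2BM f fX fBM).
Qed.

End LeftQuadrilateralEdge.

Lemma right_quad_edge_saturated (s t : 'I_n) : a <= s < b -> c <= t ->
  ~ blocker [set: 'I_n] (BM :\ (s, t)).
Proof.
move=> asb ct.
have [o1 o1E] : exists w : 'I_n, w = 1 :> nat by apply: exists_vertex; lia.
have [ob1 ob1E] : exists w : 'I_n, w = b.+1 :> nat by apply: exists_vertex; lia.
have dst : is_diag [set: 'I_n] (s, t) by rewrite is_diag_setT; lia.
have tI : triangulation (inside [set: 'I_n] s t) (fan (inside [set: 'I_n] s t) ob1).
  by apply: fan_triangulation; rewrite in_inside inE; lia.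
have tO : triangulation (outside [set: 'I_n] s t) (fan (outside [set: 'I_n] s t) o1).
  by apply: fan_triangulation; rewrite in_outside inE; lia.
apply: (not_blocker_setD1 (triangulation_split dst tI tO)) => -[p q].
by case/setUP=> [/setUP[|] | /set1P-> //]; fan_edge_not_in_BM.
Qed.

Lemma BM_saturated e : e \in BM -> ~ blocker [set: 'I_n] (BM :\ e).
Proof.
case: e => r l /BM_cases[| /BT_saturated // | /BB_saturated //].
case/orP=> [/and4P[ra bl not_0c not_ab] | /andP[asb ct]].
  exact: left_quad_edge_saturated.
exact: right_quad_edge_saturated.
Qed.

Lemma BM_diagonals : BM \subset diagonals [set: 'I_n].
Proof.
apply/subsetP=> -[p q] /BM_cases[pqQ | pqT | pqB]; rewrite in_diagonals.
- by rewrite is_diag_setT; move: pqQ; rewrite /Q_shaped; have := ltn_ord q; lia.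
- case: satT => [[/subsetP sBT _] _]; apply: (is_diag_subset (subsetT polyT)).
  by rewrite -in_diagonals sBT.
- case: satB => [[/subsetP sBB _] _]; apply: (is_diag_subset (subsetT polyB)).
  by rewrite -in_diagonals sBB.
Qed.

Lemma BM_saturated_blocker : saturated_blocker [set: 'I_n] BM.
Proof. by split; [split; [exact: BM_diagonals | exact: BM_blocks] | exact: BM_saturated]. Qed.

End Proposition.

Theorem proposition3p2 (n a b c : nat) (BT BB : {set edge n}) :
  0 < a -> a < b -> b < c -> c < n.-1 ->
  let VR := [set i : 'I_n | i < a] in
  let VB := [set i : 'I_n | (a <= i) && (i < b)] in
  let VL := [set i : 'I_n | (b <= i) && (i < c)] in
  let VT := [set i : 'I_n | c <= i] in
  3 <= #|VL| -> 3 <= #|VR| -> 2 <= #|VT| -> 2 <= #|VB| ->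
  let BQ := [set e : edge n | ((e.1 \in VR) && (e.2 \in VL))
                              || ((e.1 \in VB) && (e.2 \in VT))] in
  saturated_blocker (VT :|: [set i : 'I_n | (val i == 0) || (val i == c.-1)]) BT ->
  saturated_blocker (VB :|: [set i : 'I_n | (val i == a.-1) || (val i == b)]) BB ->
  let BM := [set e in BQ | ~~ edge_is e 0 c.-1 && ~~ edge_is e a.-1 b]
              :|: BT :|: BB in
  saturated_blocker [set: 'I_n] BM /\
  #|BM| = #|VT| * #|VB| + #|VL| * #|VR| + #|BT| + #|BB| - 2.
Proof.
move=> a_gt0 ab bc cn VR VB VL VT cardL cardR cardT cardB BQ satT satB BM.
have sizeR : #|VR| <= a - 0 by apply: card_le_range => i; rewrite inE; lia.
have sizeB : #|VB| <= b - a by apply: card_le_range => i; rewrite inE; lia.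
have sizeL : #|VL| <= c - b by apply: card_le_range => i; rewrite inE; lia.
have sizeT : #|VT| <= n - c by apply: card_le_range => i; rewrite inE; have := ltn_ord i; lia.
split; [apply: (BM_saturated_blocker satT satB) | apply: (card_BM satT satB)]; lia.
Qed.
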